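(* Let $l\in\mathbb{N}$ and let $(e^i_n)_{i=1,n\in\mathbb{N}}^l$ be a plegma spreading sequence in a Banach space such that, for each $1\le i\le l$, the sequence $(e^i_n)_n$ is unconditional. Then the whole family $(e^i_n)_{i=1,n\in\mathbb{N}}^l$ is an unconditional sequence.
   Context: For $k\in\mathbb{N}$, $[\mathbb{N}]^k$ denotes the $k$-element subsets of $\mathbb{N}$, each identified with its increasing enumeration $s(1)<\cdots<s(k)$. A plegma family in $[\mathbb{N}]^k$ is a finite sequence $(s_i)_{i=1}^l$ in $[\mathbb{N}]^k$ with (i) $s_{i_1}(j_1)<s_{i_2}(j_2)$ for all $1\le j_1<j_2\le k$ and all $1\le i_1,i_2\le l$, and (ii) $s_{i_1}(j)\le s_{i_2}(j)$ for all $1\le i_1<i_2\le l$ and $1\le j\le k$. For such $s=(s_i)_{i=1}^l$ and a vector $x=\sum_{(i,j)\in F}a_{ij}e^i_j$ with $F\subset\{1,\ldots,l\}\times\{1,\ldots,k\}$, the plegma shift of $x$ is $s(x)=\sum_{(i,j)\in F}a_{ij}e^i_{s_i(j)}$. A sequence $(e^i_n)_{i=1,n\in\mathbb{N}}^l$ in a Banach space is plegma spreading if each $(e^i_n)_n$ is a normalized Schauder basic sequence and, for every $x\in\mathrm{span}\{e^i_n\}$, $\|x\|=\|s(x)\|$ for every plegma shift $s(x)$ of $x$ (for every $k$ and every plegma family $s$ in $[\mathbb{N}]^k$ for which it is defined). *)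

From HB Require Import structures.
From mathcomp Require Import all_boot all_order all_algebra.
From mathcomp Require Import all_classical all_reals all_analysis.
Set Implicit Arguments. Unset Strict Implicit. Unset Printing Implicit Defensive.
Import Order.TTheory GRing.Theory Num.Theory.
Import numFieldNormedType.Exports.
Local Open Scope classical_set_scope.
Local Open Scope ring_scope.

Section Defs.
Variables (R : realType) (V : normedModType R).

Definition lin_span (x : nat -> V) : set V :=
  [set y | exists (n : nat) (a : nat -> R), y = \sum_(k < n) a k *: x k].

Definition schauder_basic (x : nat -> V) : Prop :=
  forall y, closure (lin_span x) y ->
    exists! a : nat -> R, (fun n => \sum_(k < n) a k *: x k) @ \oo --> y.

Definition normalized (x : nat -> V) : Prop := forall n, `|x n| = 1.

Definition unconditional (I : eqType) (x : I -> V) : Prop :=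
  (forall i, x i != 0) /\
  exists C : R, forall (s : seq I) (a eps : I -> R), uniq s ->
    (forall i, eps i = 1 \/ eps i = -1) ->
    `|\sum_(i <- s) (eps i * a i) *: x i| <= C * `|\sum_(i <- s) a i *: x i|.

End Defs.

(* A plegma family (s_i)_{i<l} in [N]^k, s_i given by its increasing
   enumeration s i : 'I_k -> nat (0-based indices). *)
Definition plegma_family (l k : nat) (s : 'I_l -> 'I_k -> nat) : Prop :=
  (forall i (j1 j2 : 'I_k), (j1 < j2)%N -> (s i j1 < s i j2)%N) /\
  (forall (i1 i2 : 'I_l) (j1 j2 : 'I_k), (j1 < j2)%N -> (s i1 j1 < s i2 j2)%N) /\
  (forall (i1 i2 : 'I_l) (j : 'I_k), (i1 < i2)%N -> (s i1 j <= s i2 j)%N).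

Definition plegma_spreading (R : realType) (V : normedModType R) (l : nat)
    (e : 'I_l -> nat -> V) : Prop :=
  (forall i, normalized (e i) /\ schauder_basic (e i)) /\
  forall (k : nat) (s : 'I_l -> 'I_k -> nat) (a : 'I_l -> 'I_k -> R),
    plegma_family s ->
    `|\sum_(i < l) \sum_(j < k) a i j *: e i j| =
    `|\sum_(i < l) \sum_(j < k) a i j *: e i (s i j)|.

From HB Require Import structures.
From mathcomp Require Import all_boot all_order all_algebra.
From mathcomp Require Import all_classical all_reals all_analysis.
Import numFieldNormedType.Exports.
From mathcomp Require Import zify lra.
Import Order.TTheory GRing.Theory Num.Theory.

Set Implicit Arguments.
Unset Strict Implicit.
Unset Printing Implicit Defensive.
Local Open Scope ring_scope.

(* Fix a row i0 and a finite combination x = sum_{i,j} B_ij e^i_j.  Interleave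
   the rows with period l+1, row i placed at positions (l+1)j + i; shifting row
   i0 alone one step further is again a plegma shift, so both vectors have
   norm |x|.  Their difference is P - Q, where P and Q carry row i0 on the
   disjoint position sets (l+1)j + i0 and (l+1)j + i0 + 1.  Unconditionality
   of row i0 bounds |P + Q| by C |P - Q|, hence |P| <= (1 + C) |x|, and |P| is
   the norm of the projection of x onto row i0 by spreading.  Summing these
   row estimates with the unconditional constants of the rows bounds every
   sign change of x. *)

Lemma sum_iota_ord (W : nmodType) (N : nat) (F : nat -> W) :
  \sum_(j <- iota 0 N) F j = \sum_(j < N) F j.
Proof. by rewrite -(big_mkord xpredT) /index_iota subn0. Qed.

Section SignBounded.
Variables (R : realType) (V : normedModType R).

Definition sign_bounded (I : eqType) (x : I -> V) (C : R) : Prop :=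
  forall (s : seq I) (a eps : I -> R), uniq s ->
    (forall i, eps i = 1 \/ eps i = -1) ->
    `|\sum_(i <- s) (eps i * a i) *: x i| <= C * `|\sum_(i <- s) a i *: x i|.

Lemma sign_bounded_norm (I : eqType) (x : I -> V) (C : R) :
  sign_bounded x C -> sign_bounded x `|C|.
Proof.
move=> xC s a eps s_uniq eps_sign; apply: le_trans (xC s a eps s_uniq eps_sign) _.
by rewrite ler_wpM2r ?ler_norm.
Qed.

Lemma sign_bounded_ord (x : nat -> V) (C : R) (N : nat) (b eps : nat -> R) :
  sign_bounded x C -> (forall n, eps n = 1 \/ eps n = -1) ->
  `|\sum_(j < N) (eps j * b j) *: x j| <= C * `|\sum_(j < N) b j *: x j|.
Proof.
move=> xC eps_sign.
by have := xC _ b _ (iota_uniq 0 N) eps_sign; rewrite !sum_iota_ord.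
Qed.

Lemma sign_bounded_addB (I : eqType) (x : I -> V) (C : R) (s t : seq I)
    (a : I -> R) :
  sign_bounded x C -> uniq (s ++ t) ->
  `|\sum_(i <- s) a i *: x i + \sum_(i <- t) a i *: x i| <=
    C * `|\sum_(i <- s) a i *: x i - \sum_(i <- t) a i *: x i|.
Proof.
move=> xC st_uniq.
pose eps i : R := if i \in s then 1 else -1.
have eps_sign i : eps i = 1 \/ eps i = -1 by rewrite /eps; case: ifP; [left|right].
have eps_s : {in s, forall i, eps i = 1} by move=> i; rewrite /eps => ->.
have eps_t : {in t, forall i, eps i = -1}.
  move: st_uniq; rewrite cat_uniq => /and3P[_ /hasPn t_notin_s _] i /t_notin_s.
  by rewrite /eps => /negPf ->.
have := xC _ (fun i => eps i * a i) eps st_uniq eps_sign; rewrite !big_cat /=.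
have -> : \sum_(i <- s) (eps i * (eps i * a i)) *: x i = \sum_(i <- s) a i *: x i.
  by apply: eq_big_seq => i /eps_s ->; rewrite !mul1r.
have -> : \sum_(i <- t) (eps i * (eps i * a i)) *: x i = \sum_(i <- t) a i *: x i.
  by apply: eq_big_seq => i /eps_t ->; rewrite !mulN1r opprK.
have -> : \sum_(i <- s) (eps i * a i) *: x i = \sum_(i <- s) a i *: x i.
  by apply: eq_big_seq => i /eps_s ->; rewrite mul1r.
have -> : \sum_(i <- t) (eps i * a i) *: x i = - \sum_(i <- t) a i *: x i.
  by rewrite -sumrN; apply: eq_big_seq => i /eps_t ->; rewrite mulN1r scaleNr.
done.
Qed.

Lemma sign_bounded_adjacent (x : nat -> V) (C : R) (d r N : nat) (b : nat -> R) :
  sign_bounded x C -> (r.+1 < d)%N ->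
  `|\sum_(j < N) b j *: x (d * j + r)%N + \sum_(j < N) b j *: x (d * j + r).+1| <=
    C * `|\sum_(j < N) b j *: x (d * j + r)%N - \sum_(j < N) b j *: x (d * j + r).+1|.
Proof.
move=> xC r_lt_d; have d_gt0 : (0 < d)%N by lia.
have div_d j (q : nat) : (q < d)%N -> ((d * j + q) %/ d = j)%N.
  by move=> q_lt_d; rewrite mulnC divnMDl // divn_small ?addn0.
have mod_d j (q : nat) : (q < d)%N -> ((d * j + q) %% d = q)%N.
  by move=> q_lt_d; rewrite mulnC modnMDl modn_small.
pose pos := [seq (d * j + r)%N | j <- iota 0 N].
pose pos1 := [seq (d * j + r).+1 | j <- iota 0 N].
have uniq_pos : uniq (pos ++ pos1).
  rewrite cat_uniq !map_inj_uniq ?iota_uniq ?andbT //=.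
  - apply/hasPn => _ /mapP[j _ ->]; apply/mapP => -[j' _ /(congr1 (modn^~ d))].
    by rewrite -addnS !mod_d //; lia.
  - by move=> j j' /(congr1 (divn^~ d)); rewrite -!addnS !div_d.
  - by move=> j j' /(congr1 (divn^~ d)); rewrite !div_d //; lia.
have := sign_bounded_addB (fun n => b (n %/ d)%N) xC uniq_pos.
rewrite !big_map.
have -> : \sum_(j <- iota 0 N) b ((d * j + r) %/ d)%N *: x (d * j + r)%N =
          \sum_(j <- iota 0 N) b j *: x (d * j + r)%N.
  by apply: eq_bigr => j _; rewrite div_d //; lia.
have -> : \sum_(j <- iota 0 N) b ((d * j + r).+1 %/ d)%N *: x (d * j + r).+1 =
          \sum_(j <- iota 0 N) b j *: x (d * j + r).+1.
  by apply: eq_bigr => j _; rewrite -addnS div_d.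
by rewrite !sum_iota_ord.
Qed.

End SignBounded.

Lemma plegma_interleave (l k : nat) (g : 'I_l -> nat) :
  (forall i, g i <= l)%N -> (forall i1 i2 : 'I_l, i1 < i2 -> g i1 <= g i2)%N ->
  plegma_family (fun (i : 'I_l) (j : 'I_k) => l.+1 * j + g i)%N.
Proof.
move=> g_le g_mono.
have block_lt j1 j2 : (j1 < j2 -> l.+1 * j1 + l.+1 <= l.+1 * j2)%N.
  by move=> j12; rewrite addnC -mulnS leq_mul2l j12 orbT.
split; [|split].
- move=> i j1 j2 /block_lt; have := g_le i; lia.
- move=> i1 i2 j1 j2 /block_lt; have := g_le i1; have := g_le i2; lia.
- move=> i1 i2 j /g_mono; lia.
Qed.

Lemma sum_uniq_pairs (V : zmodType) (I : finType) (g : I * nat -> V)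
    (s : seq (I * nat)) (N : nat) :
  uniq s -> (forall p, p \in s -> (p.2 < N)%N) ->
  \sum_(p <- s) g p =
  \sum_(i : I) \sum_(j < N) (if (i, nat_of_ord j) \in s then g (i, nat_of_ord j) else 0).
Proof.
move=> s_uniq s_lt_N.
pose T := [seq (i, j) | i <- enum I, j <- iota 0 N].
have s_perm : perm_eq s [seq p <- T | p \in s].
  apply: uniq_perm => //.
    apply: filter_uniq; apply: allpairs_uniq; rewrite ?enum_uniq ?iota_uniq //.
    by move=> [? ?] [? ?] _ _.
  move=> [i j]; rewrite mem_filter andbC; case sij: ((i, j) \in s); rewrite ?andbT ?andbF //.
  apply/esym/allpairsP; exists (i, j); split => //=; first by rewrite mem_enum.
  by rewrite mem_iota add0n; exact: s_lt_N sij.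
rewrite (perm_big _ s_perm) big_filter big_mkcond big_allpairs big_enum /=.
by apply: eq_bigr => i _; rewrite sum_iota_ord.
Qed.

Section PlegmaSpreading.
Variables (R : realType) (V : normedModType R) (l : nat) (e : 'I_l -> nat -> V).
Hypothesis e_spreading : plegma_spreading e.

Lemma norm_interleave (g : 'I_l -> nat) (N : nat) (B : 'I_l -> nat -> R) :
  (forall i, g i <= l)%N -> (forall i1 i2 : 'I_l, i1 < i2 -> g i1 <= g i2)%N ->
  `|\sum_(i < l) \sum_(j < N) B i j *: e i j| =
  `|\sum_(i < l) \sum_(j < N) B i j *: e i (l.+1 * j + g i)%N|.
Proof.
by move=> g_le g_mono; apply: e_spreading.2 N _ (fun i (j : 'I_N) => B i j)
  (plegma_interleave _ g_le g_mono).
Qed.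

Lemma norm_row_interleave (i0 : 'I_l) (N : nat) (b : nat -> R) :
  `|\sum_(j < N) b j *: e i0 j| = `|\sum_(j < N) b j *: e i0 (l.+1 * j + i0)%N|.
Proof.
have := norm_interleave N (fun i j => if i == i0 then b j else 0)
  (fun i : 'I_l => ltnW (ltn_ord i)) (fun _ _ => @ltnW _ _).
have only_i0 (F : 'I_l -> 'I_N -> nat) :
    \sum_(i < l) \sum_(j < N) (if i == i0 then b j else 0) *: e i (F i j) =
    \sum_(j < N) b j *: e i0 (F i0 j).
  rewrite (bigD1 i0) //= eqxx [X in _ + X]big1 ?addr0 // => i /negPf i_ne_i0.
  by apply: big1 => j _; rewrite i_ne_i0 scale0r.
by rewrite !only_i0.
Qed.

Lemma norm_row_shift_subr_le (i0 : 'I_l) (N : nat) (B : 'I_l -> nat -> R) :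
  `|\sum_(j < N) B i0 j *: e i0 (l.+1 * j + i0)%N -
    \sum_(j < N) B i0 j *: e i0 (l.+1 * j + i0).+1| <=
  `|\sum_(i < l) \sum_(j < N) B i j *: e i j| *+ 2.
Proof.
rewrite mulr2n.
pose g (i : 'I_l) := (i + (i == i0))%N.
have g_le i : (g i <= l)%N by have := ltn_ord i; rewrite /g; case: (i == i0) => /=; lia.
have g_mono (i1 i2 : 'I_l) : (i1 < i2 -> g i1 <= g i2)%N.
  by rewrite /g; case: (i1 == i0); case: (i2 == i0) => /=; lia.
have id_le (i : 'I_l) : (i <= l)%N := ltnW (ltn_ord i).
have shift_subr :
    \sum_(i < l) \sum_(j < N) B i j *: e i (l.+1 * j + i)%N -
    \sum_(i < l) \sum_(j < N) B i j *: e i (l.+1 * j + g i)%N =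
    \sum_(j < N) B i0 j *: e i0 (l.+1 * j + i0)%N -
    \sum_(j < N) B i0 j *: e i0 (l.+1 * j + i0).+1.
  rewrite -sumrB (bigD1 i0) //= [X in _ + X]big1 ?addr0 => [|i /negPf i_ne_i0].
    by rewrite -sumrB /g eqxx addn1 sumrB; congr (_ - _); apply: eq_bigr => j _; rewrite addnS.
  by rewrite -sumrB big1 // => j _; rewrite /g i_ne_i0 addn0 subrr.
rewrite -shift_subr; apply: le_trans (ler_normB _ _) _.
by rewrite -(norm_interleave N B id_le (fun _ _ => @ltnW _ _)) -(norm_interleave N B g_le g_mono).
Qed.

Lemma norm_row_le (i0 : 'I_l) (C : R) (N : nat) (B : 'I_l -> nat -> R) :
  0 <= C -> sign_bounded (e i0) C ->
  `|\sum_(j < N) B i0 j *: e i0 j| <=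
    (1 + C) * `|\sum_(i < l) \sum_(j < N) B i j *: e i j|.
Proof.
move=> C_ge0 row_C; set x := \sum_(i < l) _.
rewrite norm_row_interleave.
set P := \sum_(j < N) _; set Q := \sum_(j < N) B i0 j *: e i0 (l.+1 * j + i0).+1.
have PQ_subr : `|P - Q| <= `|x| *+ 2 := norm_row_shift_subr_le i0 N B.
have PQ_addr : `|P + Q| <= C * `|P - Q|.
  by apply: sign_bounded_adjacent row_C _; rewrite ltnS.
have P_twice : `|P| + `|P| <= `|P - Q| + `|P + Q|.
  have -> : `|P| + `|P| = `|(P - Q) + (P + Q)|.
    by rewrite addrACA addNr addr0 -mulr2n normrMn mulr2n.
  exact: ler_normD.
have : C * `|P - Q| <= C * `|x| *+ 2 by rewrite -mulrnAr ler_wpM2l.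
by have := normr_ge0 (P - Q); have := normr_ge0 x; lra.
Qed.

End PlegmaSpreading.

Theorem theorem2p16 (R : realType) (V : completeNormedModType R) (l : nat)
    (e : 'I_l -> nat -> V) :
  plegma_spreading e ->
  (forall i : 'I_l, unconditional (e i)) ->
  unconditional (fun p : 'I_l * nat => e p.1 p.2).
Proof.
move=> e_spreading e_unc; split => [p|]; first exact: (e_unc p.1).1.
have [C row_C] : {C : 'I_l -> R & forall i, sign_bounded (e i) (C i)}.
  exact: choice (fun i => (e_unc i).2).
exists (\sum_(i < l) `|C i| * (1 + `|C i|)) => s a eps s_uniq eps_sign.
pose N := (\max_(p <- s) p.2).+1.
have s_lt_N p : p \in s -> (p.2 < N)%N by move=> ps; rewrite ltnS leq_bigmax_seq.
pose B i j := if (i, j) \in s then a (i, j) else 0.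
have expand (h : 'I_l * nat -> R -> R) : (forall p, h p 0 = 0) ->
    \sum_(p <- s) h p (a p) *: e p.1 p.2 =
    \sum_(i < l) \sum_(j < N) h (i, nat_of_ord j) (B i j) *: e i j.
  move=> h0; rewrite (sum_uniq_pairs _ s_uniq s_lt_N); apply: eq_bigr => i _; apply: eq_bigr => j _.
  by rewrite /B; case: ifP; rewrite ?h0 ?scale0r.
rewrite (expand (fun p c => eps p * c)) => [|p]; last exact: mulr0.
rewrite (expand (fun _ c => c)) //.
rewrite mulr_suml; apply: le_trans (ler_norm_sum _ _ _) (ler_sum _ _) => i _.
have C_ge0 := normr_ge0 (C i); have row_normC := sign_bounded_norm (row_C i).
apply: le_trans (sign_bounded_ord N (B i) row_normC (fun j => eps_sign (i, j))) _.
by rewrite -mulrA ler_wpM2l // norm_row_le.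
Qed.
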